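(* Let $\rho$ be a valuation of a fixpoint context $\Theta$, let $(X:\sigma)\in\Theta$, and for $\varphi\in\mathcal{L}^s(\Theta;\tau)$ let $[\![X.\varphi]\!]\rho : \mathcal{P}([\![\sigma]\!]) \to \mathcal{P}([\![\tau]\!])$ be the map $S \mapsto [\![\varphi]\!]\rho[S/X]$. (1) If $\varphi \in \mathcal{L}^s(\Theta;\tau)$ for any $s\in\{\pm,+,-\}$, then $[\![X.\varphi]\!]\rho$ is monotone. (2) If $\varphi \in \mathcal{L}^+(\Theta;\tau)$, then $[\![X.\varphi]\!]\rho$ preserves directed unions. (3) If $\varphi\in\mathcal{L}^-(\Theta;\tau)$, then $[\![X.\varphi]\!]\rho$ preserves codirected intersections.
   Context: Pure types: closed types of $\tau ::= \mathbf{1} \mid \tau\times\tau \mid \tau\to\tau \mid \tau+\tau \mid \alpha \mid \mu\alpha.\tau$, interpreted as Scott domains: $[\![\mathbf{1}]\!]=\{\bot\le\top\}$; products componentwise with projections $\pi_1,\pi_2$; $[\![\tau\to\sigma]\!]$ = Scott-continuous functions with pointwise order; $[\![\tau_1+\tau_2]\!]$ = disjoint union with a new bottom, with injections $\mathrm{inj}_i$; $[\![\mu\alpha.\tau]\!]$ = canonical bilimit solution with inverse isomorphisms $\mathrm{fold}:[\![\tau[\mu\alpha.\tau/\alpha]]\!]\to[\![\mu\alpha.\tau]\!]$, $\mathrm{unfold}$. A family of sets is directed (resp. codirected) if nonempty and any two members are contained in (resp. contain) a common member. Iteration terms: $t ::= i \mid 0 \mid t+1$. Fixpoint contexts $\Theta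 = X_1:\sigma_1,\dots,X_n:\sigma_n$. For $s\in\{\pm,+,-\}$, $\mathcal{L}^s(\Theta;\tau)$ is generated by: $\mathrm{True},\mathrm{False}$; closure under $\wedge,\vee$; $\langle()\rangle\in\mathcal{L}^s(\Theta;\mathbf{1})$; $\langle\pi_i\rangle\varphi$ (type $\tau_1\times\tau_2$, $\varphi$ of type $\tau_i$); $\langle\mathrm{inj}_i\rangle\varphi$ (type $\tau_1+\tau_2$, $\varphi$ of type $\tau_i$); $\langle\mathrm{fold}\rangle\varphi$ (type $\mu\alpha.\tau$, $\varphi$ of type $\tau[\mu\alpha.\tau/\alpha]$); $X$ if $(X:\tau)\in\Theta$; weakening of $\Theta$; $(\mu^t X)\varphi,(\nu^t X)\varphi\in\mathcal{L}^s(\Theta;\tau)$ if $\varphi\in\mathcal{L}^s(\Theta,X:\tau;\tau)$; $(\exists i)\varphi\in\mathcal{L}^+(\Theta;\tau)$ if $\varphi\in\mathcal{L}^+(\Theta;\tau)$ and $i \mathrel{\mathrm{Pos}} \varphi$; $(\forall i)\varphi\in\mathcal{L}^-(\Theta;\tau)$ if $\varphi\in\mathcal{L}^-(\Theta;\tau)$ and $i\mathrel{\mathrm{Neg}}\varphi$; $\psi\Rightarrow\varphi\in\mathcal{L}^s(\,;\sigma\to\tau)$ if $\psi\in\mathcal{L}^{-s}(\,;\sigma)$ and $\varphi\in\mathcal{L}^s(\,;\tau)$, where $-\pm=\pm$, $-+=-$, $--=+$. Pos, Neg are inductively defined: $i\mathrel{\mathrm{Pos}}\varphi$ and $i\mathrel{\mathrm{Neg}}\varphi$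 hold if $i$ not free in $\varphi$; both preserved by $\wedge,\vee$ and the modalities; $i\mathrel{\mathrm{Pos}}(\psi\Rightarrow\varphi)$ if $i\mathrel{\mathrm{Neg}}\psi$ and $i\mathrel{\mathrm{Pos}}\varphi$; $i\mathrel{\mathrm{Neg}}(\psi\Rightarrow\varphi)$ if $i\mathrel{\mathrm{Pos}}\psi$ and $i\mathrel{\mathrm{Neg}}\varphi$; $i\mathrel{\mathrm{Pos}}(\exists j)\varphi$ if $i\mathrel{\mathrm{Pos}}\varphi$; $i\mathrel{\mathrm{Neg}}(\forall j)\varphi$ if $i\mathrel{\mathrm{Neg}}\varphi$; $i\mathrel{\mathrm{Pos}}(\mu^tX)\varphi$ if $i\mathrel{\mathrm{Pos}}\varphi$; $i\mathrel{\mathrm{Pos}}(\nu^tX)\varphi$ if $i\mathrel{\mathrm{Pos}}\varphi$ and $i$ not free in $t$; $i\mathrel{\mathrm{Neg}}(\nu^tX)\varphi$ if $i\mathrel{\mathrm{Neg}}\varphi$; $i\mathrel{\mathrm{Neg}}(\mu^tX)\varphi$ if $i\mathrel{\mathrm{Neg}}\varphi$ and $i$ not free in $t$. Semantics: a valuation $\rho$ of $\Theta$ maps each $(X:\sigma)\in\Theta$ to $\rho(X)\subseteq[\![\sigma]\!]$ and iteration variables to naturals. $[\![\mathrm{True}]\!]\rho=[\![\tau]\!]$, $[\![\mathrm{False}]\!]\rho=\emptyset$, $\wedge,\vee$ are $\cap,\cup$, $[\![X]\!]\rho=\rho(X)$, $[\![\langle()\rangle]\!]\rho=\{\top\}$,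 $[\![\langle\pi_i\rangle\varphi]\!]\rho=\{x\mid \pi_i(x)\in[\![\varphi]\!]\rho\}$, $[\![\langle\mathrm{inj}_i\rangle\varphi]\!]\rho=\{\mathrm{inj}_i(x)\mid x\in[\![\varphi]\!]\rho\}$, $[\![\langle\mathrm{fold}\rangle\varphi]\!]\rho=\{x\mid\mathrm{unfold}(x)\in[\![\varphi]\!]\rho\}$, $[\![\psi\Rightarrow\varphi]\!]\rho=\{f\mid\forall x\in[\![\psi]\!]\rho,\ f(x)\in[\![\varphi]\!]\rho\}$, $[\![(\exists i)\varphi]\!]\rho=\bigcup_{n}[\![\varphi]\!]\rho[n/i]$, $[\![(\forall i)\varphi]\!]\rho=\bigcap_{n}[\![\varphi]\!]\rho[n/i]$, and with $F(S)=[\![\varphi]\!]\rho[S/X]$, $n=[\![t]\!]\rho$: $[\![(\mu^tX)\varphi]\!]\rho=F^n(\emptyset)$, $[\![(\nu^tX)\varphi]\!]\rho=F^n([\![\tau]\!])$. *)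

From Stdlib Require Import List PeanoNat Bool.
Import ListNotations.


Inductive ty : Type :=
| TUnit : ty
| TProd : ty -> ty -> ty
| TArr  : ty -> ty -> ty
| TSum  : ty -> ty -> ty
| TVar  : nat -> ty
| TMu   : ty -> ty.

Definition ty_eq_dec (a b : ty) : {a = b} + {a <> b}.
Proof. decide equality; apply Nat.eq_dec. Defined.

Fixpoint lift_ty (k : nat) (t : ty) : ty :=
  match t with
  | TUnit => TUnit
  | TProd a b => TProd (lift_ty k a) (lift_ty k b)
  | TArr a b => TArr (lift_ty k a) (lift_ty k b)
  | TSum a b => TSum (lift_ty k a) (lift_ty k b)
  | TVar n => if Nat.ltb n k then TVar n else TVar (S n)
  | TMu b => TMu (lift_ty (S k) b)
  end.

Fixpoint subst_ty (k : nat) (u : ty) (t : ty) : ty :=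
  match t with
  | TUnit => TUnit
  | TProd a b => TProd (subst_ty k u a) (subst_ty k u b)
  | TArr a b => TArr (subst_ty k u a) (subst_ty k u b)
  | TSum a b => TSum (subst_ty k u a) (subst_ty k u b)
  | TVar n => if Nat.eqb n k then u else if Nat.ltb n k then TVar n else TVar (pred n)
  | TMu b => TMu (subst_ty (S k) (lift_ty 0 u) b)
  end.

Definition unroll (b : ty) : ty := subst_ty 0 (TMu b) b.

Fixpoint closed_at (k : nat) (t : ty) : bool :=
  match t with
  | TUnit => true
  | TProd a b | TArr a b | TSum a b => closed_at k a && closed_at k b
  | TVar n => Nat.ltb n k
  | TMu b => closed_at (S k) b
  end.
Definition closed_ty (t : ty) : Prop := closed_at 0 t = true.

(** The Scott-domain model of the paper is one instance. *)
Record interp : Type := {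
  dom : ty -> Type;
  top : dom TUnit;
  proj1 : forall a b, dom (TProd a b) -> dom a;
  proj2 : forall a b, dom (TProd a b) -> dom b;
  inj1 : forall a b, dom a -> dom (TSum a b);
  inj2 : forall a b, dom b -> dom (TSum a b);
  inj1_inj : forall a b (x y : dom a), inj1 a b x = inj1 a b y -> x = y;
  inj2_inj : forall a b (x y : dom b), inj2 a b x = inj2 a b y -> x = y;
  inj12_disj : forall a b (x : dom a) (y : dom b), inj1 a b x <> inj2 a b y;
  ufold : forall b, dom (TMu b) -> dom (unroll b);
  fold : forall b, dom (unroll b) -> dom (TMu b);
  fold_ufold : forall b x, fold b (ufold b x) = x;
  ufold_fold : forall b x, ufold b (fold b x) = x;
  app : forall a b, dom (TArr a b) -> dom a -> dom b
}.

Inductive iterm : Type :=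
| IVar : nat -> iterm
| IZero : iterm
| ISucc : iterm -> iterm.

Fixpoint isem (rI : nat -> nat) (t : iterm) : nat :=
  match t with
  | IVar i => rI i
  | IZero => 0
  | ISucc t => S (isem rI t)
  end.

Fixpoint ifree_t (i : nat) (t : iterm) : Prop :=
  match t with
  | IVar j => i = j
  | IZero => False
  | ISucc t => ifree_t i t
  end.

Inductive form : Type :=
| FTrue : form
| FFalse : form
| FAnd : form -> form -> form
| FOr : form -> form -> form
| FUnit : form
| FProj1 : form -> form
| FProj2 : form -> form
| FInj1 : form -> form
| FInj2 : form -> form
| FFold : form -> form
| FVar : nat -> form
| FMu : iterm -> nat -> form -> form
| FNu : iterm -> nat -> form -> form
| FEx : nat -> form -> form
| FAll : nat -> form -> form
| FImp : form -> form -> form.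

Fixpoint ifree (i : nat) (f : form) : Prop :=
  match f with
  | FTrue | FFalse | FUnit | FVar _ => False
  | FAnd a b | FOr a b | FImp a b => ifree i a \/ ifree i b
  | FProj1 a | FProj2 a | FInj1 a | FInj2 a | FFold a => ifree i a
  | FMu t _ a | FNu t _ a => ifree_t i t \/ ifree i a
  | FEx j a | FAll j a => i <> j /\ ifree i a
  end.

Inductive Pos (i : nat) : form -> Prop :=
| Pos_nf : forall f, ~ ifree i f -> Pos i f
| Pos_and : forall a b, Pos i a -> Pos i b -> Pos i (FAnd a b)
| Pos_or : forall a b, Pos i a -> Pos i b -> Pos i (FOr a b)
| Pos_p1 : forall a, Pos i a -> Pos i (FProj1 a)
| Pos_p2 : forall a, Pos i a -> Pos i (FProj2 a)
| Pos_i1 : forall a, Pos i a -> Pos i (FInj1 a)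
| Pos_i2 : forall a, Pos i a -> Pos i (FInj2 a)
| Pos_fold : forall a, Pos i a -> Pos i (FFold a)
| Pos_imp : forall a b, Neg i a -> Pos i b -> Pos i (FImp a b)
| Pos_ex : forall j a, Pos i a -> Pos i (FEx j a)
| Pos_mu : forall t X a, Pos i a -> Pos i (FMu t X a)
| Pos_nu : forall t X a, Pos i a -> ~ ifree_t i t -> Pos i (FNu t X a)
with Neg (i : nat) : form -> Prop :=
| Neg_nf : forall f, ~ ifree i f -> Neg i f
| Neg_and : forall a b, Neg i a -> Neg i b -> Neg i (FAnd a b)
| Neg_or : forall a b, Neg i a -> Neg i b -> Neg i (FOr a b)
| Neg_p1 : forall a, Neg i a -> Neg i (FProj1 a)
| Neg_p2 : forall a, Neg i a -> Neg i (FProj2 a)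
| Neg_i1 : forall a, Neg i a -> Neg i (FInj1 a)
| Neg_i2 : forall a, Neg i a -> Neg i (FInj2 a)
| Neg_fold : forall a, Neg i a -> Neg i (FFold a)
| Neg_imp : forall a b, Pos i a -> Neg i b -> Neg i (FImp a b)
| Neg_all : forall j a, Neg i a -> Neg i (FAll j a)
| Neg_nu : forall t X a, Neg i a -> Neg i (FNu t X a)
| Neg_mu : forall t X a, Neg i a -> ~ ifree_t i t -> Neg i (FMu t X a).

(** * Polarities and typing: wf s Theta tau phi  <->  phi \in L^s(Theta; tau) *)
Inductive pol : Type := PBoth | PPlus | PMinus .
Definition negp (s : pol) : pol :=
  match s with PBoth => PBoth | PPlus => PMinus | PMinus => PPlus end.

Definition ctx := list (nat * ty).
Fixpoint lookup (G : ctx) (X : nat) : option ty :=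
  match G with
  | [] => None
  | (Y, t) :: G' => if Nat.eqb X Y then Some t else lookup G' X
  end.
Definition ctx_closed (G : ctx) : Prop := forall p, In p G -> closed_ty (snd p).

Inductive wf : pol -> ctx -> ty -> form -> Prop :=
| wf_true : forall s G t, wf s G t FTrue
| wf_false : forall s G t, wf s G t FFalse
| wf_and : forall s G t a b, wf s G t a -> wf s G t b -> wf s G t (FAnd a b)
| wf_or : forall s G t a b, wf s G t a -> wf s G t b -> wf s G t (FOr a b)
| wf_unit : forall s G, wf s G TUnit FUnit
| wf_p1 : forall s G t1 t2 a, wf s G t1 a -> wf s G (TProd t1 t2) (FProj1 a)
| wf_p2 : forall s G t1 t2 a, wf s G t2 a -> wf s G (TProd t1 t2) (FProj2 a)
| wf_i1 : forall s G t1 t2 a, wf s G t1 a -> wf s G (TSum t1 t2) (FInj1 a)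
| wf_i2 : forall s G t1 t2 a, wf s G t2 a -> wf s G (TSum t1 t2) (FInj2 a)
| wf_fold : forall s G b a, wf s G (unroll b) a -> wf s G (TMu b) (FFold a)
| wf_var : forall s G X t, lookup G X = Some t -> wf s G t (FVar X)
| wf_weak : forall s G G' t a, wf s G t a ->
    (forall X u, lookup G X = Some u -> lookup G' X = Some u) -> wf s G' t a
| wf_mu : forall s G t X a it, wf s ((X, t) :: G) t a -> wf s G t (FMu it X a)
| wf_nu : forall s G t X a it, wf s ((X, t) :: G) t a -> wf s G t (FNu it X a)
| wf_ex : forall G t i a, wf PPlus G t a -> Pos i a -> wf PPlus G t (FEx i a)
| wf_all : forall G t i a, wf PMinus G t a -> Neg i a -> wf PMinus G t (FAll i a)
| wf_imp : forall s t1 t2 a b, wf (negp s) [] t1 a -> wf s [] t2 b ->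
    wf s [] (TArr t1 t2) (FImp a b).

Section Sem.
Variable I : interp.

Definition pset (t : ty) := dom I t -> Prop.

(** valuation of fixpoint variables: a set at every type for every name
    (only the entry at the type assigned by the context matters) *)
Definition valX := nat -> forall t : ty, pset t.

Definition updX (r : valX) (X : nat) (t : ty) (S : pset t) : valX :=
  fun Y u => if Nat.eqb Y X then
               match ty_eq_dec t u with
               | left e => eq_rect t pset S u e
               | right _ => r Y u
               end
             else r Y u.

Definition updI (rI : nat -> nat) (i n : nat) : nat -> nat :=
  fun j => if Nat.eqb j i then n else rI j.

Fixpoint sem (f : form) (t : ty) (r : valX) (rI : nat -> nat) {struct f} : pset t :=
  match f with
  | FTrue => fun _ => True
  | FFalse => fun _ => False
  | FAnd a b => fun x => sem a t r rI x /\ sem b t r rI x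
  | FOr a b => fun x => sem a t r rI x \/ sem b t r rI x
  | FUnit => match t return pset t with
             | TUnit => fun x => x = top I
             | _ => fun _ => False end
  | FProj1 a => match t return pset t with
                | TProd t1 t2 => fun x => sem a t1 r rI (proj1 I t1 t2 x)
                | _ => fun _ => False end
  | FProj2 a => match t return pset t with
                | TProd t1 t2 => fun x => sem a t2 r rI (proj2 I t1 t2 x)
                | _ => fun _ => False end
  | FInj1 a => match t return pset t with
               | TSum t1 t2 => fun y => exists x, sem a t1 r rI x /\ y = inj1 I t1 t2 x
               | _ => fun _ => False end
  | FInj2 a => match t return pset t with
               | TSum t1 t2 => fun y => exists x, sem a t2 r rI x /\ y = inj2 I t1 t2 x
               | _ => fun _ => False end
  | FFold a => match t return pset t with
               | TMu b => fun x => sem a (unroll b) r rI (ufold I b x)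
               | _ => fun _ => False end
  | FVar X => r X t
  | FMu it X a =>
      Nat.iter (isem rI it) (fun S => sem a t (updX r X t S) rI) (fun _ => False)
  | FNu it X a =>
      Nat.iter (isem rI it) (fun S => sem a t (updX r X t S) rI) (fun _ => True)
  | FEx i a => fun x => exists n, sem a t r (updI rI i n) x
  | FAll i a => fun x => forall n, sem a t r (updI rI i n) x
  | FImp a b => match t return pset t with
                | TArr t1 t2 => fun g => forall x, sem a t1 r rI x -> sem b t2 r rI (app I t1 t2 g x)
                | _ => fun _ => False end
  end.

Definition semX (f : form) (t : ty) (r : valX) (rI : nat -> nat) (X : nat) (s : ty)
  : pset s -> pset t := fun S => sem f t (updX r X s S) rI.

End Sem.

Definition subset {A : Type} (S T : A -> Prop) : Prop := forall x, S x -> T x.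
Definition set_eq {A : Type} (S T : A -> Prop) : Prop := forall x, S x <-> T x.
Definition directed {A : Type} (F : (A -> Prop) -> Prop) : Prop :=
  (exists S, F S) /\
  forall S T, F S -> F T -> exists U, F U /\ subset S U /\ subset T U.
Definition codirected {A : Type} (F : (A -> Prop) -> Prop) : Prop :=
  (exists S, F S) /\
  forall S T, F S -> F T -> exists U, F U /\ subset U S /\ subset U T.
Definition bigunion {A : Type} (F : (A -> Prop) -> Prop) : A -> Prop :=
  fun x => exists S, F S /\ S x.
Definition bigcap {A : Type} (F : (A -> Prop) -> Prop) : A -> Prop :=
  fun x => forall S, F S -> S x.
Definition image_fam {A B : Type} (f : (A -> Prop) -> (B -> Prop))
  (F : (A -> Prop) -> Prop) : (B -> Prop) -> Prop :=
  fun T => exists S, F S /\ T = f S.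

(* Induction on the derivation of phi in L^s, carrying monotonicity and, according
   to s, preservation of directed unions or codirected intersections.  Conjunction
   preserves directed unions and disjunction codirected intersections because two
   members of the family have a common bound; existential quantification only
   preserves unions and universal only intersections, matching their restriction to
   L^+ and L^-.  The approximants of (mu^t X) and (nu^t X) are finite iterates
   F^n, and an operator that has the properties in each of two arguments has them
   along the diagonal.  Implications are formed in the empty context, so their
   meaning does not depend on X. *)

From Stdlib Require Import List PeanoNat Classical FunctionalExtensionality.
Import ListNotations.

Definition monotone {A B : Type} (H : (A -> Prop) -> (B -> Prop)) : Prop :=
  forall S T, subset S T -> subset (H S) (H T).

(* Only the nontrivial inclusions: the reverse ones hold for every monotone
   operator ([monotone_bigunion], [monotone_bigcap]). *)
Definition union_continuous {A B : Type} (H : (A -> Prop) -> (B -> Prop)) : Prop :=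
  forall F, directed F -> subset (H (bigunion F)) (bigunion (image_fam H F)).

Definition cap_continuous {A B : Type} (H : (A -> Prop) -> (B -> Prop)) : Prop :=
  forall F, codirected F -> subset (bigcap (image_fam H F)) (H (bigcap F)).

Record polarized {A B : Type} (s : pol) (H : (A -> Prop) -> (B -> Prop)) : Prop := {
  polarized_monotone : monotone H;
  polarized_union : s = PPlus -> union_continuous H;
  polarized_cap : s = PMinus -> cap_continuous H
}.

Section SetOperators.
Context {A B C : Type}.
Implicit Types (s : pol) (F : (A -> Prop) -> Prop).

Lemma monotone_bigunion (H : (A -> Prop) -> (B -> Prop)) F :
  monotone H -> subset (bigunion (image_fam H F)) (H (bigunion F)).
Proof.
  intros M x [_ [[S [FS ->]] Hx]].
  apply (M S); [intros y Sy; exists S; auto | exact Hx].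
Qed.

Lemma monotone_bigcap (H : (A -> Prop) -> (B -> Prop)) F :
  monotone H -> subset (H (bigcap F)) (bigcap (image_fam H F)).
Proof.
  intros M x Hx _ [S [FS ->]].
  apply (M (bigcap F)); [intros y Fy; exact (Fy S FS) | exact Hx].
Qed.

Lemma union_continuous_set_eq (H : (A -> Prop) -> (B -> Prop)) F :
  monotone H -> union_continuous H -> directed F ->
  set_eq (H (bigunion F)) (bigunion (image_fam H F)).
Proof. intros M U D x. split; [apply (U F D) | apply monotone_bigunion, M]. Qed.

Lemma cap_continuous_set_eq (H : (A -> Prop) -> (B -> Prop)) F :
  monotone H -> cap_continuous H -> codirected F ->
  set_eq (H (bigcap F)) (bigcap (image_fam H F)).
Proof. intros M Cc D x. split; [apply monotone_bigcap, M | apply (Cc F D)]. Qed.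

Lemma directed_image (H : (A -> Prop) -> (B -> Prop)) F :
  monotone H -> directed F -> directed (image_fam H F).
Proof.
  intros M [[S0 FS0] D]. split; [exists (H S0), S0; auto|].
  intros _ _ [S1 [FS1 ->]] [S2 [FS2 ->]].
  destruct (D S1 S2 FS1 FS2) as (U & FU & S1U & S2U).
  exists (H U). split; [exists U; auto | split; apply M; auto].
Qed.

Lemma codirected_image (H : (A -> Prop) -> (B -> Prop)) F :
  monotone H -> codirected F -> codirected (image_fam H F).
Proof.
  intros M [[S0 FS0] D]. split; [exists (H S0), S0; auto|].
  intros _ _ [S1 [FS1 ->]] [S2 [FS2 ->]].
  destruct (D S1 S2 FS1 FS2) as (U & FU & US1 & US2).
  exists (H U). split; [exists U; auto | split; apply M; auto].
Qed.

Lemma polarized_const s (K : B -> Prop) : polarized s (fun _ : A -> Prop => K).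
Proof.
  split.
  - intros S T _ x Hx; exact Hx.
  - intros _ F [[S0 FS0] _] x Hx. exists K. split; [exists S0; auto | exact Hx].
  - intros _ F [[S0 FS0] _] x Hx. apply Hx. exists S0; auto.
Qed.

Lemma polarized_id s : polarized s (fun S : A -> Prop => S).
Proof.
  split.
  - intros S T ST; exact ST.
  - intros _ F _ x [S [FS Sx]]. exists S. split; [exists S; auto | exact Sx].
  - intros _ F _ x Hx S FS. apply Hx. exists S; auto.
Qed.

Lemma polarized_and s (H1 H2 : (A -> Prop) -> (B -> Prop)) :
  polarized s H1 -> polarized s H2 -> polarized s (fun S x => H1 S x /\ H2 S x).
Proof.
  intros [M1 U1 C1] [M2 U2 C2]. split.
  - intros S T ST x [h1 h2]. split; [apply (M1 S) | apply (M2 S)]; auto.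
  - intros Hs F D x [h1 h2].
    destruct (U1 Hs F D x h1) as [_ [[S1 [FS1 ->]] h1']].
    destruct (U2 Hs F D x h2) as [_ [[S2 [FS2 ->]] h2']].
    destruct D as [_ D]. destruct (D S1 S2 FS1 FS2) as (U & FU & S1U & S2U).
    exists (fun x => H1 U x /\ H2 U x).
    split; [exists U; auto | split; [apply (M1 S1) | apply (M2 S2)]; auto].
  - intros Hs F D x Hx.
    split; [apply (C1 Hs F D) | apply (C2 Hs F D)]; intros _ [S [FS ->]];
      apply (Hx (fun x => H1 S x /\ H2 S x)); exists S; auto.
Qed.

Lemma polarized_or s (H1 H2 : (A -> Prop) -> (B -> Prop)) :
  polarized s H1 -> polarized s H2 -> polarized s (fun S x => H1 S x \/ H2 S x).
Proof.
  intros [M1 U1 C1] [M2 U2 C2]. split.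
  - intros S T ST x [h|h]; [left; apply (M1 S) | right; apply (M2 S)]; auto.
  - intros Hs F D x [h|h].
    + destruct (U1 Hs F D x h) as [_ [[S [FS ->]] h']].
      exists (fun x => H1 S x \/ H2 S x). split; [exists S; auto | left; exact h'].
    + destruct (U2 Hs F D x h) as [_ [[S [FS ->]] h']].
      exists (fun x => H1 S x \/ H2 S x). split; [exists S; auto | right; exact h'].
  - intros Hs F D x Hx.
    destruct (classic (exists S1, F S1 /\ ~ H1 S1 x)) as [[S1 [FS1 n1]] | none].
    + (* a common lower bound of S1 and S2 forces x into H2, hence into H2 S2 *)
      right. apply (C2 Hs F D). intros _ [S2 [FS2 ->]].
      destruct D as [_ D]. destruct (D S1 S2 FS1 FS2) as (U & FU & US1 & US2).
      destruct (Hx (fun x => H1 U x \/ H2 U x)) as [h|h]; [exists U; auto | |].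
      * contradiction (n1 (M1 U S1 US1 x h)).
      * exact (M2 U S2 US2 x h).
    + left. apply (C1 Hs F D). intros _ [S [FS ->]].
      apply NNPP. intros n. apply none. exists S; auto.
Qed.

Lemma polarized_preimage s (H : (A -> Prop) -> (B -> Prop)) (f : C -> B) :
  polarized s H -> polarized s (fun S x => H S (f x)).
Proof.
  intros [M U Cc]. split.
  - intros S T ST x. apply (M S T ST).
  - intros Hs F D x Hx. destruct (U Hs F D _ Hx) as [_ [[S [FS ->]] h]].
    exists (fun x => H S (f x)). split; [exists S; auto | exact h].
  - intros Hs F D x Hx. apply (Cc Hs F D). intros _ [S [FS ->]].
    apply (Hx (fun x => H S (f x))). exists S; auto.
Qed.

Lemma polarized_image s (H : (A -> Prop) -> (C -> Prop)) (f : C -> B) :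
  (forall x y, f x = f y -> x = y) ->
  polarized s H -> polarized s (fun S y => exists x, H S x /\ y = f x).
Proof.
  intros f_inj [M U Cc]. split.
  - intros S T ST y [x [h ->]]. exists x. split; [exact (M S T ST x h) | reflexivity].
  - intros Hs F D y [x [h ->]]. destruct (U Hs F D x h) as [_ [[S [FS ->]] h']].
    exists (fun y => exists x, H S x /\ y = f x). split; [exists S; auto | exists x; auto].
  - intros Hs F D y Hy.
    assert (Hpt : forall S, F S -> exists x, H S x /\ y = f x)
      by (intros S FS; apply Hy; exists S; auto).
    pose proof D as [[S0 FS0] _]. destruct (Hpt S0 FS0) as [x0 [_ ->]].
    exists x0. split; [|reflexivity].
    apply (Cc Hs F D). intros _ [S [FS ->]].
    destruct (Hpt S FS) as [x [h E]]. apply f_inj in E. subst. exact h.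
Qed.

Lemma polarized_exists (H : nat -> (A -> Prop) -> (B -> Prop)) :
  (forall n, polarized PPlus (H n)) -> polarized PPlus (fun S x => exists n, H n S x).
Proof.
  intros P. split; [| intros _ | discriminate].
  - intros S T ST x [n h]. exists n. exact (polarized_monotone _ _ (P n) S T ST x h).
  - intros F D x [n h].
    destruct (polarized_union _ _ (P n) eq_refl F D x h) as [_ [[S [FS ->]] h']].
    exists (fun x => exists n, H n S x). split; [exists S; auto | exists n; exact h'].
Qed.

Lemma polarized_forall (H : nat -> (A -> Prop) -> (B -> Prop)) :
  (forall n, polarized PMinus (H n)) -> polarized PMinus (fun S x => forall n, H n S x).
Proof.
  intros P. split; [| discriminate | intros _].
  - intros S T ST x h n. exact (polarized_monotone _ _ (P n) S T ST x (h n)).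
  - intros F D x Hx n. apply (polarized_cap _ _ (P n) eq_refl F D).
    intros _ [S [FS ->]]. apply (Hx (fun x => forall n, H n S x)); exists S; auto.
Qed.

Section Diagonal.
Variables (H : (A -> Prop) -> (B -> Prop) -> (C -> Prop)) (g : (A -> Prop) -> (B -> Prop)).
Hypotheses (monoR : forall T, monotone (H T)) (monoL : forall S, monotone (fun T => H T S))
  (mono_g : monotone g).

Lemma monotone_diag : monotone (fun T => H T (g T)).
Proof.
  intros S T ST x h. exact (monoL (g T) S T ST x (monoR S (g S) (g T) (mono_g S T ST) x h)).
Qed.

Lemma union_continuous_diag :
  (forall T, union_continuous (H T)) -> (forall S, union_continuous (fun T => H T S)) ->
  union_continuous g -> union_continuous (fun T => H T (g T)).
Proof.
  intros UR UL Ug F D x Hx.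
  apply (monoR _ _ _ (Ug F D)) in Hx.
  destruct (UR _ _ (directed_image g F mono_g D) x Hx) as [_ [[_ [[T [FT ->]] ->]] h]].
  destruct (UL (g T) F D x h) as [_ [[T' [FT' ->]] h']].
  destruct D as [_ D]. destruct (D T T' FT FT') as (V & FV & TV & T'V).
  exists (H V (g V)). split; [exists V; auto|].
  exact (monoR V _ _ (mono_g T V TV) x (monoL (g T) T' V T'V x h')).
Qed.

Lemma cap_continuous_diag :
  (forall T, cap_continuous (H T)) -> (forall S, cap_continuous (fun T => H T S)) ->
  cap_continuous g -> cap_continuous (fun T => H T (g T)).
Proof.
  intros CR CL Cg F D x Hx.
  apply (monoR _ _ _ (Cg F D)).
  apply (CR _ _ (codirected_image g F mono_g D)). intros _ [_ [[T [FT ->]] ->]].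
  apply (CL (g T) F D). intros _ [T' [FT' ->]].
  destruct D as [_ D]. destruct (D T T' FT FT') as (V & FV & VT & VT').
  apply (monoL (g T) V T' VT'), (monoR V (g V) (g T) (mono_g V T VT)).
  apply Hx. exists V; auto.
Qed.

End Diagonal.

Lemma polarized_diag s (H : (A -> Prop) -> (B -> Prop) -> (C -> Prop))
    (g : (A -> Prop) -> (B -> Prop)) :
  (forall T, polarized s (H T)) -> (forall S, polarized s (fun T => H T S)) ->
  polarized s g -> polarized s (fun T => H T (g T)).
Proof.
  intros PR PL [Mg Ug Cg].
  assert (MR : forall T, monotone (H T)) by (intros T; apply PR).
  assert (ML : forall S, monotone (fun T => H T S)) by (intros S; apply PL).
  split; [apply monotone_diag | intros Hs | intros Hs]; auto.
  - apply union_continuous_diag; auto; [intros T; apply PR | intros S; apply PL]; exact Hs.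
  - apply cap_continuous_diag; auto; [intros T; apply PR | intros S; apply PL]; exact Hs.
Qed.

End SetOperators.

Lemma polarized_iter {A B : Type} (s : pol) (H : (A -> Prop) -> (B -> Prop) -> (B -> Prop))
    (b : B -> Prop) :
  (forall T, polarized s (H T)) -> (forall S, polarized s (fun T => H T S)) ->
  forall k, polarized s (fun T => Nat.iter k (H T) b).
Proof.
  intros PR PL k. induction k as [|k IH].
  - exact (polarized_const s b).
  - exact (polarized_diag s H _ PR PL IH).
Qed.

Section Semantics.
Variable I : interp.

Definition agree_on (G : ctx) (r r' : valX I) : Prop :=
  forall Y u, lookup G Y = Some u -> r Y u = r' Y u.

Lemma agree_on_updX G (r r' : valX I) X t S :
  agree_on G r r' -> agree_on ((X, t) :: G) (updX I r X t S) (updX I r' X t S).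
Proof.
  intros E Y u; simpl; unfold updX.
  destruct (Y =? X); [intros [= <-] | apply E].
  destruct (ty_eq_dec t t); [reflexivity | contradiction].
Qed.

Lemma sem_agree s G t f : wf s G t f ->
  forall (r r' : valX I) rI, agree_on G r r' -> sem I f t r rI = sem I f t r' rI.
Proof.
  induction 1; intros r r' rI E; simpl;
    try (rewrite (IHwf r r' rI E)); try (rewrite (IHwf1 r r' rI E), (IHwf2 r r' rI E));
    try reflexivity.
  - apply E; assumption.
  - apply IHwf. intros Y u Hl. auto.
  - f_equal. extensionality S. apply IHwf, agree_on_updX, E.
  - f_equal. extensionality S. apply IHwf, agree_on_updX, E.
  - replace (sem I a t r) with (sem I a t r') by (extensionality j; symmetry; auto).
    reflexivity.
  - replace (sem I a t r) with (sem I a t r') by (extensionality j; symmetry; auto).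
    reflexivity.
Qed.

Lemma semX_unbound s G t f (r : valX I) rI X sigma :
  wf s G t f -> lookup G X = None -> semX I f t r rI X sigma = fun _ => sem I f t r rI.
Proof.
  intros Hf HX. extensionality S. apply (sem_agree s G t f Hf).
  intros Y u HY. unfold updX. destruct (Nat.eqb_spec Y X) as [->|]; [congruence | reflexivity].
Qed.

Lemma updX_shadow (r : valX I) X t S S' :
  updX I (updX I r X t S) X t S' = updX I r X t S'.
Proof.
  extensionality Y; extensionality u. unfold updX.
  destruct (Y =? X); [destruct (ty_eq_dec t u)|]; reflexivity.
Qed.

Lemma updX_comm (r : valX I) X t S Y u S' : X <> Y \/ t <> u ->
  updX I (updX I r X t S) Y u S' = updX I (updX I r Y u S') X t S.
Proof.
  intros Hd. extensionality Z; extensionality v. unfold updX.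
  destruct (Nat.eqb_spec Z Y), (Nat.eqb_spec Z X); try reflexivity.
  destruct (ty_eq_dec u v), (ty_eq_dec t v); try reflexivity.
  subst. tauto.
Qed.

Lemma polarized_semX_updX s a t X (r : valX I) rI X0 sigma :
  (forall r' : valX I, polarized s (semX I a t r' rI X0 sigma)) ->
  forall S, polarized s (fun T => sem I a t (updX I (updX I r X0 sigma T) X t S) rI).
Proof.
  intros Pa S.
  destruct (Nat.eq_dec X0 X) as [<-|nX]; [destruct (ty_eq_dec sigma t) as [<-|nt]|].
  - apply (eq_ind_r (polarized s) (polarized_const s (sem I a sigma (updX I r X0 sigma S) rI))).
    extensionality T. rewrite updX_shadow. reflexivity.
  - apply (eq_ind_r (polarized s) (Pa (updX I r X0 t S))).
    extensionality T. unfold semX. rewrite updX_comm by tauto. reflexivity.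
  - apply (eq_ind_r (polarized s) (Pa (updX I r X t S))).
    extensionality T. unfold semX. rewrite updX_comm by tauto. reflexivity.
Qed.

Lemma semX_polarized s G t f : wf s G t f ->
  forall rI X sigma (r : valX I), polarized s (semX I f t r rI X sigma).
Proof.
  induction 1; intros rI X0 sigma r; unfold semX; simpl.
  - apply polarized_const.
  - apply polarized_const.
  - apply polarized_and; [apply IHwf1 | apply IHwf2].
  - apply polarized_or; [apply IHwf1 | apply IHwf2].
  - apply polarized_const.
  - exact (polarized_preimage s _ (proj1 I t1 t2) (IHwf rI X0 sigma r)).
  - exact (polarized_preimage s _ (proj2 I t1 t2) (IHwf rI X0 sigma r)).
  - exact (polarized_image s _ (inj1 I t1 t2) (inj1_inj I t1 t2) (IHwf rI X0 sigma r)).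
  - exact (polarized_image s _ (inj2 I t1 t2) (inj2_inj I t1 t2) (IHwf rI X0 sigma r)).
  - exact (polarized_preimage s _ (ufold I b) (IHwf rI X0 sigma r)).
  - unfold updX. destruct (X =? X0); [destruct (ty_eq_dec sigma t) as [<-|]|].
    + apply polarized_id.
    + apply polarized_const.
    + apply polarized_const.
  - apply IHwf.
  - apply polarized_iter; [intros T; apply IHwf | apply polarized_semX_updX; intros; apply IHwf].
  - apply polarized_iter; [intros T; apply IHwf | apply polarized_semX_updX; intros; apply IHwf].
  - exact (polarized_exists _ (fun n => IHwf (updI rI i n) X0 sigma r)).
  - exact (polarized_forall _ (fun n => IHwf (updI rI i n) X0 sigma r)).
  - apply (eq_ind_r (polarized s) (polarized_const s (sem I (FImp a b) (TArr t1 t2) r rI))).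
    apply (semX_unbound s [] (TArr t1 t2) (FImp a b) r rI X0 sigma); auto using wf_imp.
Qed.

End Semantics.

Theorem proposition5p6 (I : interp) (G : ctx) (r : valX I) (rI : nat -> nat)
  (X : nat) (sigma tau : ty) (s : pol) (phi : form) :
  ctx_closed G -> closed_ty tau ->
  lookup G X = Some sigma ->
  wf s G tau phi ->
  (* (1) monotone *)
  (forall S T : pset I sigma, subset S T ->
     subset (semX I phi tau r rI X sigma S) (semX I phi tau r rI X sigma T)) /\
  (* (2) preserves directed unions *)
  (s = PPlus -> forall F : pset I sigma -> Prop, directed F ->
     set_eq (semX I phi tau r rI X sigma (bigunion F))
            (bigunion (image_fam (semX I phi tau r rI X sigma) F))) /\
  (* (3) preserves codirected intersections *)
  (s = PMinus -> forall F : pset I sigma -> Prop, codirected F ->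
     set_eq (semX I phi tau r rI X sigma (bigcap F))
            (bigcap (image_fam (semX I phi tau r rI X sigma) F))).
Proof.
  intros _ _ _ Hphi.
  destruct (semX_polarized I s G tau phi Hphi rI X sigma r) as [M U Cc].
  split; [exact M | split; intros Hs F D].
  - exact (union_continuous_set_eq _ F M (U Hs) D).
  - exact (cap_continuous_set_eq _ F M (Cc Hs) D).
Qed.
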